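(* Let $G=G_{\mathbf E}$ be a multi-GGS group which is not the constant GGS group, and let $g\in G$ be directed along the ray $\overline 0$. Then $g\in B$.
   Context: Let $p$ be an odd prime and $X=\{0,1,\dots,p-1\}$, identified with $\mathbb F_p$. $X^*$ is the $p$-regular rooted tree of finite words over $X$; $\mathrm{Aut}(X^* )$ acts on the right. Sections $g|_v$ are defined by $(vw)^g=v^g\,w^{g|_v}$, and the label $g|^v\in\mathrm{Sym}(X)$ is the permutation by which $g|_v$ acts on one-letter words. $\mathrm{Stab}(1)$ is the stabiliser of all one-letter words and $\psi_1\colon\mathrm{Stab}(1)\to\mathrm{Aut}(X^* )^p$, $g\mapsto(g|_0,\dots,g|_{p-1})$, is an isomorphism. Let $a$ be the rooted automorphism acting as $\sigma=(0\,1\,\cdots\,p-1)$ on the first letter and trivially on the remaining letters. Let $\mathbf E\le\mathbb F_p^{p-1}$ be a subspace of dimension $r\ge1$; $E$ is the $r\times(p-1)$ matrix whose rows form a fixed basis of $\mathbf E$, with columns $\mathbf e_1,\dots,\mathbf e_{p-1}$. For $\mathbf n\in\mathbb F_p^r$, $b^{\mathbf n}\in\mathrm{Stab}(1)$ is the unique automorphism with $\psi_1(b^{\mathbf n})=(b^{\mathbf n},a^{\mathbf n\cdot\mathbf e_1},\dots,a^{\mathbf n\cdot\mathbf e_{p-1}})$; $B=\{b^{\mathbf n}\}$. $G=G_{\mathbf E}$ is generated by $a$ and $B$; it is the constant GGS group if $\mathbf E=\{(\lambda,\dots,\lambda)\mid\lambda\in\mathbb F_p\}$. The ray $\overline0$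 consists of the vertices $0^n$ ($n\ge0$). An automorphism $g$ is directed along $\overline 0$ if it fixes every vertex $0^n$ and $g|^v=\mathrm{id}$ for every vertex $v$ that is not joined by an edge to some vertex $0^n$. *)

From mathcomp Require Import all_boot all_order all_algebra all_fingroup.
Set Implicit Arguments. Unset Strict Implicit. Unset Printing Implicit Defensive.

(* Automorphisms of the p-regular rooted tree X^* , X = 'I_p = {0,...,p-1},
   are represented by their portraits: g v = g|^v, the label (permutation of X)
   at vertex v.  Permutations act on the right, and mathcomp's perm product
   satisfies (s * t) x = t (s x), matching the right-action convention. *)
Section Tree.
Variable p : nat.
Definition X := 'I_p.
Definition taut := seq X -> {perm X}.

(* image of a word: [actg g u w] is the image of w below a vertex u
   (u is the original prefix). *)
Fixpoint actg (g : taut) (u w : seq X) : seq X :=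
  match w with
  | [::] => [::]
  | x :: w' => (g u x) :: actg g (rcons u x) w'
  end.
Definition act (g : taut) (w : seq X) : seq X := actg g [::] w.

Fixpoint actinvg (g : taut) (u w : seq X) : seq X :=
  match w with
  | [::] => [::]
  | x :: w' => let y := ((g u)^-1)%g x in y :: actinvg g (rcons u y) w'
  end.
Definition actinv (g : taut) (w : seq X) : seq X := actinvg g [::] w.

(* sections: (vw)^g = v^g w^{g|_v} *)
Definition section (g : taut) (v : seq X) : taut := fun w => g (v ++ w).

Definition aut_one : taut := fun _ => 1%g.
(* product gh: first g then h *)
Definition aut_mul (g h : taut) : taut := fun v => (g v * h (act g v))%g.
Definition aut_inv (g : taut) : taut := fun v => ((g (actinv g v))^-1)%g.

Definition aut_eq (g h : taut) : Prop := forall v, g v = h v.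

Inductive generated (S : taut -> Prop) : taut -> Prop :=
  | gen_base g : S g -> generated S g
  | gen_one : generated S aut_one
  | gen_mul g h : generated S g -> generated S h -> generated S (aut_mul g h)
  | gen_inv g : generated S g -> generated S (aut_inv g)
  | gen_ext g h : generated S g -> aut_eq g h -> generated S h.

Definition sigma : {perm X} := perm (@ordS_inj p).

Definition a_pow (k : nat) : taut :=
  fun v => if v is [::] then (sigma ^+ k)%g else 1%g.
Definition a : taut := a_pow 1.

(* b^n with psi_1(b^n) = (b^n, a^{n.e_1}, ..., a^{n.e_{p-1}}); letter x <> 0
   corresponds to column x-1 of E. *)
Fixpoint b_pow (r : nat) (E : 'M['F_p]_(r, p.-1)) (n : 'rV['F_p]_r)
    (v : seq X) : {perm X} :=
  match v with
  | [::] => 1%g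
  | x :: w =>
      if val x == 0%N then b_pow E n w
      else match (insub (val x).-1 : option 'I_(p.-1)) with
           | Some j => a_pow (nat_of_ord ((n *m E)%R ord0 j)) w
           | None => 1%g
           end
  end.

Definition in_B r (E : 'M['F_p]_(r, p.-1)) (g : taut) : Prop :=
  exists n : 'rV['F_p]_r, aut_eq g (b_pow E n).

Definition in_G r (E : 'M['F_p]_(r, p.-1)) (g : taut) : Prop :=
  generated (fun h => h = a \/ exists n : 'rV['F_p]_r, h = b_pow E n) g.

Definition zero_letter : option X := insub 0%N.
Definition ray_vertex (n : nat) : seq X :=
  if zero_letter is Some z then nseq n z else [::].

Definition tree_adj (v w : seq X) : Prop :=
  (exists x, w = rcons v x) \/ (exists x, v = rcons w x).

Definition directed_along_ray (g : taut) : Prop :=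
  (forall n, act g (ray_vertex n) = ray_vertex n) /\
  (forall v, ~ (exists n, tree_adj v (ray_vertex n)) -> g v = 1%g).

(* the subspace of constant vectors {(l,...,l)} *)
Definition const_space : 'M['F_p]_(1, p.-1) := const_mx 1%R.
End Tree.

(* Every element of G is the value of a word in the letters a^k and b^n.  The
   b-exponent sum of a word (a vector of F_p^r) only depends on the element:
   if w represents 1, so do its first-level sections, the b-letters of w are
   distributed among these sections with the same total exponent, and the
   a-exponent of the section at y is sum_(x != y) ((b-exponent at x) E)_(y-x).
   If one section carries all b-letters, the trivial a-exponents of the others
   kill every column of (its b-exponent) E, so its b-exponent is 0 as E has
   full row rank; otherwise we induct on the number of b-letters.
   If g is directed along the ray, its sections off the ray are powers of a,
   hence have b-exponent 0; so the section at 0 has the b-exponent n of g and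
   the a-exponents of the other sections are the entries of nE: g agrees with
   b^n at every vertex. *)
From Pilot Require Import Defs.
From mathcomp Require Import all_boot all_order all_algebra all_fingroup.
From Stdlib Require Import FunctionalExtensionality.
From mathcomp Require Import zify.
Set Implicit Arguments. Unset Strict Implicit. Unset Printing Implicit Defensive.
Import GRing.Theory.

Local Notation act := Defs.act.

Section TreeAutomorphisms.
Variable p : nat.
Implicit Types (g h k : taut p) (u v w c : seq (X p)).

Lemma actg_rcons g c u x :
  actg g c (rcons u x) = rcons (actg g c u) (g (c ++ u) x).
Proof.
elim: u c => [|y u IH] c /=; first by rewrite cats0.
by rewrite IH cat_rcons.
Qed.

Lemma act_rcons g u x : act g (rcons u x) = rcons (act g u) (g u x).
Proof. by rewrite /act actg_rcons. Qed.

Lemma actg_mul g h u w : actg (aut_mul g h) u w = actg h (act g u) (actg g u w).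
Proof. by elim: w u => [|x w IH] u //=; rewrite IH act_rcons /aut_mul permM. Qed.

Lemma act_mul g h v : act (aut_mul g h) v = act h (act g v).
Proof. by rewrite /act actg_mul. Qed.

Lemma aut_mulA g h k : aut_mul g (aut_mul h k) = aut_mul (aut_mul g h) k.
Proof. by apply: functional_extensionality => v; rewrite /aut_mul act_mul mulgA. Qed.

Lemma actg_one u w : actg (@aut_one p) u w = w.
Proof. by elim: w u => [|x w IH] u //=; rewrite IH perm1. Qed.

Lemma aut_mul1g g : aut_mul (@aut_one p) g = g.
Proof.
by apply: functional_extensionality => v; rewrite /aut_mul /act actg_one mul1g.
Qed.

Lemma aut_mulg1 g : aut_mul g (@aut_one p) = g.
Proof. by apply: functional_extensionality => v; rewrite /aut_mul mulg1. Qed.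

Lemma act_actinv g v : act g (actinv g v) = v.
Proof.
rewrite /act /actinv; elim: v [::] => [|x v IH] u //=.
by rewrite IH permKV.
Qed.

Lemma aut_inv_uniq g h : aut_mul g h = @aut_one p -> h = aut_inv g.
Proof.
move=> gh1; apply: functional_extensionality => v.
have := congr1 (fun f => f (actinv g v)) gh1.
rewrite /aut_mul /aut_one act_actinv /aut_inv => ghv1.
by rewrite -[h v](mulKg (g (actinv g v))) ghv1 mulg1.
Qed.

Lemma actg_section g u w : actg g u w = act (section g u) w.
Proof.
rewrite /act -[u in LHS]cats0; elim: w [::] => [|x w IH] c //=.
by rewrite -IH /section rcons_cat.
Qed.

Lemma section_mul g h x :
  section (aut_mul g h) [:: x] =
  aut_mul (section g [:: x]) (section h [:: g [::] x]).
Proof.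
apply: functional_extensionality => u.
by rewrite /section /aut_mul /= {1}/act /= actg_section.
Qed.

Lemma section_one x : section (@aut_one p) [:: x] = @aut_one p.
Proof. exact: functional_extensionality. Qed.

End TreeAutomorphisms.

Section RootedAutomorphisms.
Variable p : nat.
Hypothesis p_pr : prime p.

Lemma sigmaX_val k (x : X p) : val ((sigma p ^+ k)%g x) = (x + k) %% p.
Proof.
elim: k => [|k IH]; first by rewrite expg0 perm1 addn0 modn_small.
by rewrite expgSr permM permE /= IH -addn1 modnDml addn1 addnS.
Qed.

Lemma sigmaX_mod k : (sigma p ^+ k)%g = (sigma p ^+ (k %% p))%g.
Proof. by apply/permP => x; apply: val_inj; rewrite !sigmaX_val modnDmr. Qed.

Lemma sigmaX_eq1 k : (sigma p ^+ k)%g = 1%g <-> k %% p = 0.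
Proof.
split=> [|kp0]; last by rewrite sigmaX_mod kp0 expg0.
move/(congr1 (fun s : {perm X p} => val (s (Ordinal (prime_gt0 p_pr))))).
by rewrite sigmaX_val perm1 /= add0n.
Qed.

Lemma a_pow_mul k m : aut_mul (@a_pow p k) (@a_pow p m) = @a_pow p (k + m).
Proof.
apply: functional_extensionality => - [|x u]; first by rewrite /aut_mul /= expgD.
by rewrite /aut_mul /act /= mul1g.
Qed.

Lemma a_pow_mod0 k : k %% p = 0 -> @a_pow p k = @aut_one p.
Proof.
by move=> kp0; apply: functional_extensionality => - [|x u] //=; apply/sigmaX_eq1.
Qed.

Lemma a_pow_inv k : aut_mul (@a_pow p k) (@a_pow p (p.-1 * k)) = @aut_one p.
Proof.
rewrite a_pow_mul a_pow_mod0 // -{1}(mul1n k) -mulnDl add1n prednK ?prime_gt0 //.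
exact: modnMr.
Qed.

End RootedAutomorphisms.

Section BAutomorphisms.
Variables (p r : nat) (E : 'M['F_p]_(r, p.-1)).
Hypothesis p_pr : prime p.
Implicit Types (n m : 'rV['F_p]_r).

Lemma section_b_pow0 n (x : X p) :
  val x == 0 -> section (b_pow E n) [:: x] = b_pow E n.
Proof. by move=> x0; apply: functional_extensionality => u; rewrite /section /= x0. Qed.

(* b^n fixes every vertex at which some b^m has a nontrivial label. *)
Lemma b_pow_act n m v : b_pow E m (act (b_pow E n) v) = b_pow E m v.
Proof.
elim: v => [|x u IH] //; rewrite {1}/act /= perm1 actg_section.
case: ifP => x0; first by rewrite section_b_pow0 ?x0.
by case: (insub x.-1 : option 'I_(p.-1)) => [j|] //; case: u {IH}.
Qed.

Lemma val_Fp_add (c d : 'F_p) :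
  nat_of_ord (c + d)%R = (nat_of_ord c + nat_of_ord d) %% p.
Proof. by rewrite -{1}(natr_Zp c) -{1}(natr_Zp d) -natrD (val_Fp_nat p_pr). Qed.

Lemma b_pow_labelD n m v : (b_pow E n v * b_pow E m v)%g = b_pow E (n + m)%R v.
Proof.
elim: v => [|x u IH] /=; first by rewrite mulg1.
case: ifP => // x0.
case: (insub x.-1 : option 'I_(p.-1)) => [j|]; last by rewrite mulg1.
case: u {IH} => [|y u] /=; last by rewrite mulg1.
rewrite -expgD mulmxDl.
have -> : ((n *m E + m *m E) ord0 j = (n *m E) ord0 j + (m *m E) ord0 j)%R.
  by rewrite mxE.
by rewrite val_Fp_add -sigmaX_mod.
Qed.

Lemma b_pow_mul n m : aut_mul (b_pow E n) (b_pow E m) = b_pow E (n + m)%R.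
Proof.
by apply: functional_extensionality => v; rewrite /aut_mul b_pow_act b_pow_labelD.
Qed.

Lemma b_pow0 : b_pow E 0%R = @aut_one p.
Proof.
apply: functional_extensionality; elim => [|x u IH] //=.
case: ifP => // x0; case: (insub x.-1 : option 'I_(p.-1)) => [j|] //.
by rewrite mul0mx mxE; case: u {IH}.
Qed.

End BAutomorphisms.

Section Words.
Variables (p r : nat) (E : 'M['F_p]_(r, p.-1)).
Hypothesis p_pr : prime p.

Inductive letter := La of nat | Lb of 'rV['F_p]_r.

Definition eval_letter (l : letter) : taut p :=
  match l with La k => @a_pow p k | Lb n => b_pow E n end.

Definition eval_word (w : seq letter) : taut p :=
  foldr (fun l g => aut_mul (eval_letter l) g) (@aut_one p) w.

Definition b_label (n : 'rV['F_p]_r) (c : nat) : 'F_p :=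
  if insub c.-1 is Some j then (n *m E)%R ord0 j else 0%R.

Definition letter_section (l : letter) (x : X p) : seq letter :=
  match l with
  | La _ => [::]
  | Lb n => if val x == 0 then [:: Lb n]
            else if insub (val x).-1 is Some j
                 then [:: La (nat_of_ord ((n *m E)%R ord0 j))] else [::]
  end.

Fixpoint word_section (w : seq letter) (x : X p) : seq letter :=
  if w is l :: w' then letter_section l x ++ word_section w' (eval_letter l [::] x)
  else [::].

Definition b_count (w : seq letter) : nat :=
  foldr (fun l c => if l is Lb _ then c.+1 else c) 0 w.
Definition a_exp (w : seq letter) : nat :=
  foldr (fun l c => if l is La k then k + c else c) 0 w.
Definition b_exp (w : seq letter) : 'rV['F_p]_r :=
  foldr (fun l c => if l is Lb n then n + c else c)%R 0%R w.

Lemma b_count_cat w1 w2 : b_count (w1 ++ w2) = b_count w1 + b_count w2.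
Proof. by elim: w1 => [|[k|n] w1 IH] //=; rewrite IH. Qed.

Lemma a_exp_cat w1 w2 : a_exp (w1 ++ w2) = a_exp w1 + a_exp w2.
Proof. by elim: w1 => [|[k|n] w1 IH] //=; rewrite IH addnA. Qed.

Lemma b_exp_cat w1 w2 : b_exp (w1 ++ w2) = (b_exp w1 + b_exp w2)%R.
Proof. by elim: w1 => [|[k|n] w1 IH] /=; rewrite ?add0r ?IH ?addrA. Qed.

Lemma b_exp_count0 w : b_count w = 0 -> b_exp w = 0%R.
Proof. by elim: w => [|[k|n] w IH]. Qed.

Lemma eval_word_cat w1 w2 :
  eval_word (w1 ++ w2) = aut_mul (eval_word w1) (eval_word w2).
Proof. by elim: w1 => [|l w1 IH] /=; rewrite ?aut_mul1g // IH aut_mulA. Qed.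

Lemma eval_word1 l : eval_word [:: l] = eval_letter l.
Proof. exact: aut_mulg1. Qed.

Lemma eval_word_root w : eval_word w [::] = (sigma p ^+ a_exp w)%g.
Proof.
elim: w => [|[k|n] w IH] /=; first by rewrite expg0.
  by rewrite /aut_mul IH expgD.
by rewrite /aut_mul IH mul1g.
Qed.

Lemma eval_word_eq1_a_exp w : eval_word w = @aut_one p -> a_exp w %% p = 0.
Proof.
by move/(congr1 (fun f => f [::])); rewrite eval_word_root => /(sigmaX_eq1 p_pr).
Qed.

Lemma section_eval_letter l x :
  section (eval_letter l) [:: x] = eval_word (letter_section l x).
Proof.
case: l => [k|n]; first exact: functional_extensionality.
rewrite /=; case: ifP => x0; last case xj: insub => [j|];
  by rewrite ?eval_word1; apply: functional_extensionality => u;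
  rewrite /section /= x0 ?xj.
Qed.

Lemma section_eval_word w x :
  section (eval_word w) [:: x] = eval_word (word_section w x).
Proof.
elim: w x => [|l w IH] x //=.
by rewrite section_mul IH section_eval_letter eval_word_cat.
Qed.

Definition letter_inv (l : letter) : letter :=
  match l with La k => La (p.-1 * k) | Lb n => Lb (- n)%R end.

Lemma eval_letter_inv l :
  aut_mul (eval_letter l) (eval_letter (letter_inv l)) = @aut_one p.
Proof.
case: l => [k|n] /=; first exact: a_pow_inv.
by rewrite (b_pow_mul _ p_pr) subrr b_pow0.
Qed.

Definition word_inv (w : seq letter) : seq letter := rev (map letter_inv w).

Lemma eval_word_inv w : aut_mul (eval_word w) (eval_word (word_inv w)) = @aut_one p.
Proof.
elim: w => [|l w IH] /=; first exact: aut_mul1g.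
rewrite /word_inv map_cons rev_cons -cats1 eval_word_cat eval_word1.
by rewrite -!aut_mulA (aut_mulA (eval_word w)) IH aut_mul1g eval_letter_inv.
Qed.

Lemma in_G_eval_word g : in_G E g -> exists w, g = eval_word w.
Proof.
elim=> [h [->|[n ->]]| |g1 h1 _ [w1 ->] _ [w2 ->]|g1 _ [w1 ->]|g1 h1 _ [w1 ->] w1h1].
- by exists [:: La 1]; rewrite eval_word1.
- by exists [:: Lb n]; rewrite eval_word1.
- by exists [::].
- by exists (w1 ++ w2); rewrite eval_word_cat.
- by exists (word_inv w1); apply/esym/aut_inv_uniq/eval_word_inv.
- by exists w1; apply: functional_extensionality => v; rewrite -w1h1.
Qed.

Definition letter0 : X p := Ordinal (prime_gt0 p_pr).

Lemma val_eq0 (x : X p) : (val x == 0) = (x == letter0).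
Proof. by rewrite -(inj_eq val_inj). Qed.

Lemma sum_at_zero (V : nmodType) (c : V) :
  (\sum_(x : X p) (if val x == 0 then c else 0) = c)%R.
Proof.
rewrite (bigD1 letter0) //= big1 ?addr0 // => y.
by rewrite val_eq0 => /negbTE ->.
Qed.

Lemma b_count_letter_section n x :
  b_count (letter_section (Lb n) x) = (val x == 0).
Proof. by rewrite /=; case: ifP => // _; case: (insub x.-1 : option 'I_(p.-1)). Qed.

Lemma b_exp_letter_section n x :
  b_exp (letter_section (Lb n) x) = if val x == 0 then n else 0%R.
Proof.
rewrite /=; case: (val x == 0); first exact: addr0.
by case: (insub x.-1 : option 'I_(p.-1)).
Qed.

Lemma a_exp_letter_section n x :
  ((a_exp (letter_section (Lb n) x))%:R : 'F_p)%R =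
  if val x == 0 then 0%R else b_label n x.
Proof.
rewrite /b_label /=; case: ifP => _ //.
by case: (insub x.-1 : option 'I_(p.-1)) => [j|] //=; rewrite addn0 natr_Zp.
Qed.

(* Summing over the sections reindexes by the root permutation of each letter. *)
Lemma sum_b_count_section w :
  \sum_(x : X p) b_count (word_section w x) = b_count w.
Proof.
elim: w => [|l w IH] /=; first by rewrite big1.
under eq_bigr do rewrite b_count_cat.
rewrite big_split /= -(reindex_inj (P := xpredT)
  (F := fun y => b_count (word_section w y)) (@perm_inj _ (eval_letter l [::]))) IH.
case: l => [k|n] /=; first by rewrite big1.
under eq_bigr do rewrite b_count_letter_section.
by rewrite (sum_at_zero (1 : nat)).
Qed.

Lemma sum_b_exp_section w :
  (\sum_(x : X p) b_exp (word_section w x))%R = b_exp w.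
Proof.
elim: w => [|l w IH] /=; first by rewrite big1.
under eq_bigr do rewrite b_exp_cat.
rewrite big_split /= -(reindex_inj (P := xpredT)
  (F := fun y => b_exp (word_section w y)) (@perm_inj _ (eval_letter l [::]))) IH.
case: l => [k|n] /=; first by rewrite big1 ?add0r.
under eq_bigr do rewrite b_exp_letter_section.
by rewrite sum_at_zero.
Qed.

Lemma b_labelD (n m : 'rV['F_p]_r) c :
  b_label (n + m)%R c = (b_label n c + b_label m c)%R.
Proof.
rewrite /b_label; case: (insub c.-1 : option 'I_(p.-1)) => [j|]; last by rewrite addr0.
by rewrite mulmxDl mxE.
Qed.

Lemma b_label0 c : b_label 0%R c = 0%R.
Proof.
rewrite /b_label; case: (insub c.-1 : option 'I_(p.-1)) => [j|] //.
by rewrite mul0mx mxE.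
Qed.

(* [letter_sub x y] is x - y in Z/pZ. *)
Definition letter_sub (x y : X p) : nat := (val x + p.-1 * val y) %% p.

Lemma letter_sub_sigmaX k (x y : X p) :
  letter_sub ((sigma p ^+ k)%g x) ((sigma p ^+ k)%g y) = letter_sub x y.
Proof.
rewrite /letter_sub !sigmaX_val modnDml -modnDmr modnMmr modnDmr.
have -> : x + k + p.-1 * (y + k) = (x + p.-1 * y) + k * p.
  move: (val x) (val y) (prednK (prime_gt0 p_pr)) => s t; move: (p.-1) => q <-; lia.
by rewrite addnC modnMDl.
Qed.

Lemma letter_subxx x : letter_sub x x = 0.
Proof.
rewrite /letter_sub -{1}(mul1n (val x)) -mulnDl add1n prednK ?prime_gt0 //.
exact: modnMr.
Qed.

Lemma letter_sub_z x : letter_sub x letter0 = x.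
Proof. by rewrite /letter_sub muln0 addn0 modn_small ?ltn_ord. Qed.

Lemma a_exp_section w x :
  ((a_exp (word_section w x))%:R : 'F_p)%R =
  (\sum_(y | y != x) b_label (b_exp (word_section w y)) (letter_sub x y))%R.
Proof.
elim: w x => [|l w IH] x /=; first by rewrite big1 // => y _; rewrite b_label0.
case: l => [k|n] /=.
  rewrite IH (reindex_inj (@perm_inj _ (sigma p ^+ k)%g)) /=.
  by apply: eq_big => [y|y _]; rewrite ?(inj_eq (@perm_inj _ _)) ?letter_sub_sigmaX.
rewrite perm1 a_exp_cat natrD IH.
under [in RHS]eq_bigr do rewrite perm1 b_exp_cat b_labelD.
rewrite big_split /= a_exp_letter_section; congr (_ + _)%R.
under eq_bigr do rewrite b_exp_letter_section.
case: ifP => x0.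
  rewrite big1 // => y yx; case: ifP => y0; last by rewrite b_label0.
  by move: yx; rewrite -(inj_eq val_inj) (eqP x0) y0.
rewrite (bigD1 letter0) /=; last by rewrite eq_sym -val_eq0 x0.
rewrite letter_sub_z big1 ?addr0 // => y /andP [_ yz].
by rewrite val_eq0 (negbTE yz) b_label0.
Qed.

Lemma a_exp_section_single w x0 y :
  (forall y', y' != x0 -> b_exp (word_section w y') = 0%R) -> y != x0 ->
  ((a_exp (word_section w y))%:R : 'F_p)%R =
  b_label (b_exp (word_section w x0)) (letter_sub y x0).
Proof.
move=> b0 yx0; rewrite a_exp_section (bigD1 x0) 1?eq_sym //= big1 ?addr0 //.
by move=> y' /andP [_ y'x0]; rewrite b0 // b_label0.
Qed.

Lemma letter_sub_onto x0 (j : 'I_(p.-1)) :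
  exists2 y, y != x0 & letter_sub y x0 = j.+1.
Proof.
have p_gt0 := prime_gt0 p_pr.
have jp : j.+1 < p by have := ltn_ord j; lia.
pose y : X p := Ordinal (ltn_pmod (val x0 + j.+1) p_gt0).
have yx0 : letter_sub y x0 = j.+1.
  rewrite /letter_sub /= modnDml -addnA (addnC j.+1) addnA -{1}(mul1n (val x0)).
  by rewrite -mulnDl add1n prednK // mulnC modnMDl modn_small.
by exists y => //; apply: contra_eq_neq yx0 => ->; rewrite letter_subxx.
Qed.

Lemma b_label_succ N (j : 'I_(p.-1)) : b_label N j.+1 = (N *m E)%R ord0 j.
Proof.
by rewrite /b_label /= insubT //= => jp; congr ((N *m E)%R ord0 _); apply: val_inj.
Qed.

Hypothesis E_free : row_free E.

Lemma b_label_inj N : (forall j : 'I_(p.-1), b_label N j.+1 = 0%R) -> N = 0%R.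
Proof.
move=> N0; apply: (row_free_inj E_free); rewrite mul0mx; apply/rowP => j.
by rewrite -b_label_succ N0 mxE.
Qed.

Lemma b_exp_section_single w x0 :
  (forall y, y != x0 -> b_exp (word_section w y) = 0%R) ->
  (forall y, y != x0 -> a_exp (word_section w y) %% p = 0) ->
  b_exp (word_section w x0) = 0%R.
Proof.
move=> b0 a0; apply: b_label_inj => j; have [y yx0 <-] := letter_sub_onto x0 j.
by rewrite -a_exp_section_single // -(Fp_nat_mod p_pr) a0.
Qed.

Lemma b_count_section_lt w x :
  b_count (word_section w x) != b_count w ->
  b_count (word_section w x) < b_count w.
Proof.
rewrite ltn_neqAle => ->.
by rewrite -(sum_b_count_section w) (bigD1 x) //= leq_addr.
Qed.

Lemma b_exp_eval1 w : eval_word w = @aut_one p -> b_exp w = 0%R.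
Proof.
elim: {w}(b_count w) {-2}w (leqnn (b_count w)) => [|m IH] w.
  by rewrite leqn0 => /eqP /b_exp_count0.
rewrite leq_eqVlt ltnS => /orP [/eqP wm1 w1|]; last exact: IH.
have sec1 x : eval_word (word_section w x) = @aut_one p.
  by rewrite -section_eval_word w1 section_one.
rewrite -sum_b_exp_section.
have [x0 x0m1|lt_m1] := pickP (fun x => b_count (word_section w x) == m.+1).
  have count0 y : y != x0 -> b_count (word_section w y) = 0.
    move=> yx0; move/eqP: (sum_b_count_section w); rewrite (bigD1 x0) //= (eqP x0m1).
    rewrite wm1 -{2}(addn0 m.+1) eqn_add2l sum_nat_eq0 => /forallP /(_ y).
    by rewrite yx0 => /eqP.
  have b0 y : y != x0 -> b_exp (word_section w y) = 0%R.
    by move=> /count0 /b_exp_count0.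
  have x0b0 := b_exp_section_single b0 (fun y _ => eval_word_eq1_a_exp (sec1 y)).
  by rewrite big1 // => y _; case: (eqVneq y x0) => [->|/b0].
rewrite big1 // => x _; apply: IH (sec1 x).
by rewrite -ltnS -wm1 b_count_section_lt ?wm1 ?lt_m1.
Qed.

Lemma ray_vertexE n : ray_vertex p n = nseq n letter0.
Proof.
rewrite /ray_vertex /zero_letter insubT ?prime_gt0 // => p_gt0.
by congr nseq; apply: val_inj.
Qed.

Lemma near_ray_cons v :
  (exists m, tree_adj (letter0 :: v) (nseq m letter0)) ->
  exists m, tree_adj v (nseq m letter0).
Proof.
case=> - [|m] [[x /= vx]|[x /= vx]] //.
- by case: vx => _ ->; exists 1; left; exists letter0.
- by case: vx => vm; exists m; left; exists x.
- by case: vx => vm; exists m; right; exists x.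
Qed.

Lemma far_from_ray (y : X p) u :
  y != letter0 -> u != [::] -> ~ exists m, tree_adj (y :: u) (nseq m letter0).
Proof.
move=> yz u0 [[|m] [[x /= yux]|[x /= yux]]] //;
  by case: yux => *; subst; rewrite ?eqxx in yz u0.
Qed.

Lemma directed_root g : directed_along_ray g -> g [::] letter0 = letter0.
Proof. by case=> /(_ 1); rewrite ray_vertexE /act /= => - []. Qed.

Lemma directed_section0 g :
  directed_along_ray g -> directed_along_ray (section g [:: letter0]).
Proof.
move=> dir_g; have [fix_ray off_ray] := dir_g; split=> [n|v near_v].
  move: (fix_ray n.+1); rewrite !ray_vertexE /act /= directed_root //.
  by rewrite actg_section => - [].
rewrite /section /=; apply: off_ray => - [m]; rewrite ray_vertexE => near_zv.
by apply: near_v; have [m' ?] := near_ray_cons (ex_intro _ m near_zv);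
  exists m'; rewrite ray_vertexE.
Qed.

Lemma directed_label_off_ray g (y : X p) u :
  directed_along_ray g -> y != letter0 -> u != [::] -> g (y :: u) = 1%g.
Proof.
case=> _ off_ray yz u0; apply: off_ray => - [m]; rewrite ray_vertexE => near_yu.
by apply: (far_from_ray yz u0); exists m.
Qed.

Lemma directed_a_exp w : directed_along_ray (eval_word w) -> a_exp w %% p = 0.
Proof.
by move/directed_root/(congr1 val); rewrite eval_word_root sigmaX_val.
Qed.

(* Off the ray, a section of a directed element is a power of a. *)
Lemma directed_b_exp_off_ray w y :
  directed_along_ray (eval_word w) -> y != letter0 -> b_exp (word_section w y) = 0%R.
Proof.
move=> dir_w yz; set k := a_exp (word_section w y).
have sec_a : eval_word (word_section w y) = @a_pow p k.
  apply: functional_extensionality => - [|x u]; first exact: eval_word_root.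
  by rewrite -section_eval_word /section /= (directed_label_off_ray dir_w yz).
have := b_exp_eval1 (w := word_section w y ++ [:: La (p.-1 * k)]).
by rewrite eval_word_cat eval_word1 sec_a b_exp_cat addr0; apply; apply: a_pow_inv.
Qed.

Lemma directed_b_exp_section0 w :
  directed_along_ray (eval_word w) -> b_exp (word_section w letter0) = b_exp w.
Proof.
move=> dir_w; rewrite -[RHS]sum_b_exp_section (bigD1 letter0) //= big1 ?addr0 //.
by move=> y; apply: directed_b_exp_off_ray.
Qed.

Lemma directed_eval_word v w :
  directed_along_ray (eval_word w) -> eval_word w v = b_pow E (b_exp w) v.
Proof.
elim: v w => [|x v IH] w dir_w.
  by rewrite eval_word_root; apply/(sigmaX_eq1 p_pr)/directed_a_exp.
rewrite -[eval_word w (x :: v)]/(section (eval_word w) [:: x] v) section_eval_word /=.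
case: ifP => x0.
  have -> : x = letter0 by apply/val_inj/eqP.
  rewrite IH -?section_eval_word ?directed_b_exp_section0 //.
  exact: directed_section0.
have xz : x != letter0 by rewrite -val_eq0 x0.
case: v {IH} => [|y u]; last first.
  rewrite -section_eval_word /section (directed_label_off_ray dir_w xz) //.
  by case: (insub x.-1 : option 'I_(p.-1)).
have a_x := a_exp_section_single (fun y => directed_b_exp_off_ray (y := y) dir_w) xz.
rewrite directed_b_exp_section0 // letter_sub_z /b_label in a_x.
rewrite eval_word_root; case: (insub x.-1 : option 'I_(p.-1)) a_x => [j|] a_x /=.
  by rewrite sigmaX_mod [RHS]sigmaX_mod -!(val_Fp_nat p_pr) a_x natr_Zp.
by apply/(sigmaX_eq1 p_pr); rewrite -(val_Fp_nat p_pr) a_x.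
Qed.

End Words.

Theorem mainTheorem14 (p : nat) (hp : prime p) (hodd : odd p)
    (r : nat) (hr : (0 < r)%N) (E : 'M['F_p]_(r, p.-1))
    (hE : row_free E)
    (hnc : ~~ (E == const_space p)%MS)
    (g : taut p) (hg : in_G E g) (hdir : directed_along_ray g) :
  in_B E g.
Proof.
have [w gw] := in_G_eval_word hp hg; rewrite gw in hdir *.
by exists (b_exp w) => v; exact: directed_eval_word hp hE v w hdir.
Qed.
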